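(* For every $k\ge0$, every $n$-vertex graph of clique-width at most $k$ has a partial orientation $\vec{H}$ of maximum outdegree $O(k\log n)$ that is a weak $\infty$-guidance system.
   Context: All graphs are finite, simple and undirected. A partial orientation of $G$ is a directed graph $\vec{H}$ on $V(G)$ with every $(u,v)\in E(\vec{H})$ satisfying $uv\in E(G)$. $B_{\vec{H}}(v,a)$ is the set of vertices reachable from $v$ by a directed path of length at most $a$. A weak $r$-guidance system is a partial orientation $\vec{H}$ such that for any distinct $u,v$ at distance $\ell\le r$ in $G$ there exist non-negative integers $a,b$ with $a+b=\ell-1$ such that $G$ has an edge between $B_{\vec{H}}(u,a)$ and $B_{\vec{H}}(v,b)$; a weak $\infty$-guidance system is one that is a weak $r$-guidance system for every positive integer $r$. A $k$-labeled graph is a graph with each vertex labeled from $[k]$. Constructible $k$-labeled graphs are the smallest family containing all one-vertex $k$-labeled graphs and closed under disjoint unions, relabeling all vertices of label $i$ to label $j$, and adding all edges between vertices of labels $i$ and $j$. A graph has clique-width at most $k$ if its vertices can be labeled so that the resulting $k$-labeled graph is constructible. The $O(\cdot)$ hides an absolute constant. *)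

From mathcomp Require Import all_boot.
Set Implicit Arguments. Unset Strict Implicit. Unset Printing Implicit Defensive.

Section Defs.
Variable T : finType.

Definition simple_graph (e : rel T) := symmetric e /\ irreflexive e.

Definition partial_orientation (e H : rel T) := forall u v, H u v -> e u v.

Definition outdeg (H : rel T) (u : T) : nat := #|[set v | H u v]|.

Definition walk (r : rel T) (u v : T) (l : nat) : Prop :=
  exists s : seq T, size s = l /\ path r u s /\ last u s = v.

Definition dist_is (e : rel T) (u v : T) (l : nat) : Prop :=
  walk e u v l /\ forall l', l' < l -> ~ walk e u v l'.

Definition ball (H : rel T) (v : T) (a : nat) (x : T) : Prop :=
  exists l, l <= a /\ walk H v x l.

Definition weak_guidance (e H : rel T) (r : nat) : Prop :=
  forall u v l, u != v -> l <= r -> dist_is e u v l ->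
    exists a b, a + b = l.-1 /\
      exists x y, ball H u a x /\ ball H v b y /\ e x y.

Definition weak_inf_guidance (e H : rel T) : Prop :=
  forall r, 0 < r -> weak_guidance e H r.

Inductive cwexp : Type :=
| CVtx of T & nat
| CUnion of cwexp & cwexp
| CRelab of nat & nat & cwexp
| CJoin of nat & nat & cwexp.

Fixpoint cw_verts (t : cwexp) : {set T} :=
  match t with
  | CVtx x _ => [set x]
  | CUnion a b => cw_verts a :|: cw_verts b
  | CRelab _ _ a => cw_verts a
  | CJoin _ _ a => cw_verts a
  end.

Fixpoint cw_lab (t : cwexp) : T -> nat :=
  match t with
  | CVtx _ i => fun _ => i
  | CUnion a b => fun x => if x \in cw_verts a then cw_lab a x else cw_lab b x
  | CRelab i j a => fun x => if cw_lab a x == i then j else cw_lab a x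
  | CJoin _ _ a => cw_lab a
  end.

Fixpoint cw_edges (t : cwexp) : rel T :=
  match t with
  | CVtx _ _ => fun _ _ => false
  | CUnion a b => fun x y => cw_edges a x y || cw_edges b x y
  | CRelab _ _ a => cw_edges a
  | CJoin i j a => fun x y =>
      cw_edges a x y ||
      [&& x \in cw_verts a, y \in cw_verts a &
          ((cw_lab a x == i) && (cw_lab a y == j)) ||
          ((cw_lab a x == j) && (cw_lab a y == i))]
  end.

Fixpoint cw_wf (k : nat) (t : cwexp) : bool :=
  match t with
  | CVtx _ i => i < k
  | CUnion a b => [&& cw_wf k a, cw_wf k b & [disjoint cw_verts a & cw_verts b]]
  | CRelab i j a => [&& i < k, j < k & cw_wf k a]
  | CJoin i j a => [&& i < k, j < k, i != j & cw_wf k a]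
  end.

Definition cw_le (k : nat) (e : rel T) : Prop :=
  exists t : cwexp, cw_wf k t /\ cw_verts t = [set: T] /\
    forall x y, e x y = cw_edges t x y.

End Defs.

From mathcomp Require Import all_boot zify.
From Stdlib Require Import ClassicalEpsilon.
Set Implicit Arguments. Unset Strict Implicit. Unset Printing Implicit Defensive.

(* A k-expression yields balanced separators of every vertex set W: some
   subterm s contains between a third and two thirds of W, and the labels of
   s split A := W ∩ V(s) into at most k classes of twins with respect to
   W \ A.  Recurse on A and W \ A down to depth 2 log n; at each level give
   every vertex, for each class c, one arc to the next vertex of a shortest
   path towards c and one towards the neighbours of c in W \ A.  A shortest
   u-v path either stays on one side, where the recursion guides it, or
   crosses at an edge pq with p in a class c and q in W \ A.  Following arcs
   from u for |up| steps then reaches some x in c, and from v for |qv| steps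
   some y in W \ A adjacent to c; as c consists of twins, xy is an edge. *)

Lemma classic_ex_minn (P : nat -> Prop) :
  (exists n, P n) -> exists2 n, P n & forall m, P m -> n <= m.
Proof.
pose p n := if excluded_middle_informative (P n) then true else false.
have pP n : reflect (P n) (p n).
  by rewrite /p; case: excluded_middle_informative => ?; constructor.
move=> [n Pn]; have [|m /pP Pm minm] := find_ex_minn (P := p); first by exists n; apply/pP.
by exists m => // j /pP /minm.
Qed.

Section Walks.
Variable T : finType.
Implicit Types (r H : rel T) (S : pred T) (u v w x y : T).

Lemma walk0 r u v : walk r u v 0 <-> u = v.
Proof. by split=> [[[|x s] [//= _ [_ <-]]] | ->]; last exists [::]. Qed.

Lemma walkS r u v l : walk r u v l.+1 <-> exists2 w, r u w & walk r w v l.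
Proof.
split=> [[[|w s] [//= [sz] [/andP [uw ws] <-]]] | [w uw [s [sz [ws <-]]]]].
  by exists w => //; exists s.
by exists (w :: s); rewrite /= sz uw ws.
Qed.

Lemma walk_rcons r u w v l : walk r u w l -> r w v -> walk r u v l.+1.
Proof.
move=> [s [<- [us <-]]] wv; exists (rcons s v).
by rewrite size_rcons rcons_path us wv last_rcons.
Qed.

Lemma walk_rev r u v l : symmetric r -> walk r u v l -> walk r v u l.
Proof.
move=> r_sym; elim: l u => [|l IHl] u; first by move/walk0 => ->; apply/walk0.
by move/walkS=> [w uw /IHl wu]; apply: walk_rcons wu _; rewrite r_sym.
Qed.

Lemma walk_sub r r' u v l : subrel r r' -> walk r u v l -> walk r' u v l.
Proof.
by move=> rr' [s [sz [us <-]]]; exists s; split=> //; split=> //; apply: sub_path us.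
Qed.

Lemma eq_dist_is r r' u v l : r =2 r' -> dist_is r u v l -> dist_is r' u v l.
Proof.
move=> rr' [uv min_l].
have [sub_r sub_r'] : subrel r r' /\ subrel r' r by split=> x y; rewrite rr'.
by split=> [|l' lt_l' /(walk_sub sub_r')]; [apply: walk_sub uv | apply: min_l].
Qed.

Lemma ball_center H u m : ball H u m u.
Proof. by exists 0; split=> //; apply/walk0. Qed.

Lemma ball_sub H H' u m x : subrel H H' -> ball H u m x -> ball H' u m x.
Proof. by move=> HH' [l [lm ux]]; exists l; split=> //; apply: walk_sub ux. Qed.

Lemma ball_cons H u w m x : H u w -> ball H w m x -> ball H u m.+1 x.
Proof. by move=> uw [l [lm wx]]; exists l.+1; split=> //; apply/walkS; exists w. Qed.

Definition reaches r S w m := exists x l, [/\ S x, l <= m & walk r w x l].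

Lemma reaches_walk r S w x l : S x -> walk r w x l -> reaches r S w l.
Proof. by move=> Sx wx; exists x, l. Qed.

Definition guides_to r H S :=
  forall m w, reaches r S w m -> exists2 x, S x & ball H w m x.

Lemma guides_to_sub r H H' S : subrel H H' -> guides_to r H S -> guides_to r H' S.
Proof. by move=> HH' gH m w /gH [x Sx /(ball_sub HH')]; exists x. Qed.

Definition pointer_rel (g : T -> option T) : rel T := fun x y => g x == Some y.

Lemma exists_nearest_pointer r S :
  exists g, subrel (pointer_rel g) r /\ guides_to r (pointer_rel g) S.
Proof.
(* [o] is the successor of [w] on a shortest walk from [w] to [S]. *)
have step w : exists o : option T, (forall w', o = Some w' -> r w w') /\
    (~~ S w -> forall m, reaches r S w m.+1 -> exists2 w', o = Some w' & reaches r S w' m).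
  case: (classic (exists l x, S x /\ walk r w x l)) => [reach | unreach]; last first.
    exists None; split=> // _ m [x [l [Sx _ wx]]].
    by case: unreach; exists l, x.
  have [[|l] [x [Sx wx]] min_l] := classic_ex_minn reach.
    by move/walk0: wx Sx => <- Sw; exists None; split=> //; rewrite Sw.
  have [w' ww' w'x] := iffLR (walkS _ _ _ _) wx.
  exists (Some w'); split=> [_ [<-] // | _ m [y [l' [Sy l'm wy]]]].
  exists w' => //; exists x, l; split=> //.
  by rewrite -ltnS (leq_trans (min_l l' _) l'm) //; exists y.
have [g gP] := choice _ step.
exists g; split=> [x y /eqP /(gP x).1 // |].
elim=> [|m IHm] w.
  move=> [x [l [Sx]]]; rewrite leqn0 => /eqP -> /walk0 wx.
  by exists w; [rewrite wx | apply: ball_center].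
case Sw: (S w) => reach; first by exists w => //; apply: ball_center.
have [w' gw' /IHm [x Sx w'x]] := (gP w).2 (negbT Sw) m reach.
by exists x => //; apply: ball_cons w'x; rewrite /pointer_rel gw'.
Qed.

Definition pointers (I : finType) (g : I -> T -> option T) : rel T :=
  fun x y => [exists i, g i x == Some y].

Lemma pointer_rel_sub (I : finType) (g : I -> T -> option T) i :
  subrel (pointer_rel (g i)) (pointers g).
Proof. by move=> x y gxy; apply/existsP; exists i. Qed.

Lemma outdeg_pointers (I : finType) (g : I -> T -> option T) u :
  outdeg (pointers g) u <= #|I|.
Proof.
rewrite -cardsT; apply: leq_trans (leq_imset_card (fun i => odflt u (g i u)) _).
apply/subset_leq_card/subsetP => y; rewrite inE => /existsP [i /eqP giu].
by apply/imsetP; exists i; rewrite ?inE ?giu.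
Qed.

Lemma outdeg_relU H H' u : outdeg (relU H H') u <= outdeg H u + outdeg H' u.
Proof.
rewrite /outdeg; apply: leq_trans (leq_card_setU _ _).1.
by apply/subset_leq_card/subsetP => y; rewrite !inE.
Qed.

Lemma outdeg_eq0 H u : (forall v, ~~ H u v) -> outdeg H u = 0.
Proof.
move=> Hu; apply/eqP; rewrite cards_eq0; apply/eqP/setP => v.
by rewrite !inE (negbTE (Hu v)).
Qed.

Lemma outdeg_relU_disjoint (A : {set T}) H H' d :
    (forall x y, H x y -> x \in A) -> (forall x y, H' x y -> x \notin A) ->
    (forall u, outdeg H u <= d) -> (forall u, outdeg H' u <= d) ->
  forall u, outdeg (relU H H') u <= d.
Proof.
move=> HA H'A degH degH' u; apply: leq_trans (outdeg_relU _ _ _) _.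
case uA: (u \in A).
  by rewrite [outdeg H' u]outdeg_eq0 ?addn0 // => v; apply: contraTN uA => /H'A.
by rewrite [outdeg H u]outdeg_eq0 ?add0n // => v; apply: contraFN uA => /HA.
Qed.

End Walks.

Section InducedGuidance.
Variables (T : finType) (e : rel T).
Hypothesis e_sym : symmetric e.
Implicit Types (W A : {set T}) (H : rel T) (u v : T).

Definition induced W : rel T := fun x y => [&& x \in W, y \in W & e x y].

Lemma induced_sym W : symmetric (induced W).
Proof. by move=> x y; rewrite /induced e_sym andbCA. Qed.

Lemma induced_sub A W : A \subset W -> subrel (induced A) (induced W).
Proof. by move=> /subsetP AW x y /and3P [/AW xW /AW yW exy]; apply/and3P. Qed.

Lemma induced_setT : induced [set: T] =2 e.
Proof. by move=> x y; rewrite /induced !in_setT. Qed.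

Lemma walk_induced_mem W u v l : walk (induced W) u v l.+1 -> u \in W /\ v \in W.
Proof.
move=> uv; split; first by have [w /and3P []] := iffLR (walkS _ _ _ _) uv.
by have [w /and3P []] := iffLR (walkS _ _ _ _) (walk_rev (induced_sym W) uv).
Qed.

Lemma dist_is_induced_sub A W u v l : A \subset W ->
  dist_is (induced W) u v l -> walk (induced A) u v l -> dist_is (induced A) u v l.
Proof.
move=> AW [_ min_l] uv; split=> // l' lt_l' /(walk_sub (induced_sub AW)).
exact: min_l.
Qed.

Lemma walk_induced_split W A u v l : u \in W -> walk (induced W) u v l ->
  [\/ u \in A /\ walk (induced A) u v l,
      u \in W :\: A /\ walk (induced (W :\: A)) u v l |
      exists j m p q, [/\ j + m.+1 = l, walk (induced W) u p j, induced W p q,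
                          walk (induced W) q v m & (p \in A) != (q \in A)]].
Proof.
elim: l u => [|l IHl] u uW.
  move/walk0 => <-; case uA: (u \in A); first by constructor 1; split=> //; apply/walk0.
  by constructor 2; rewrite inE uA uW; split=> //; apply/walk0.
move/walkS=> [w uw wv]; have /and3P [_ wW euw] := uw.
have crossing : (u \in A) != (w \in A) -> [\/ _, _ | exists j m p q, [/\ j + m.+1 = l.+1,
    walk (induced W) u p j, induced W p q, walk (induced W) q v m
  & (p \in A) != (q \in A)]].
  by move=> uAw; constructor 3; exists 0, l, u, w; split=> //; apply/walk0.
case: (IHl w wW wv) => [[wA wAv] | [wB wBv] | [j [m [p [q [jm uq pq qv pAq]]]]]].
- case uA: (u \in A); last by apply: crossing; rewrite uA wA.
  by constructor 1; split=> //; apply/walkS; exists w; rewrite // /induced uA wA.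
- have [_ wnA] := setDP wB.
  case uA: (u \in A); first by apply: crossing; rewrite uA (negbTE wnA).
  have uB : u \in W :\: A by rewrite inE uA.
  by constructor 2; split=> //; apply/walkS; exists w; rewrite // /induced uB wB.
- constructor 3; exists j.+1, m, p, q; split=> //; first by rewrite addSn jm.
  by apply/walkS; exists w.
Qed.

Definition guided H u v l :=
  exists a b, a + b = l.-1 /\ exists x y, ball H u a x /\ ball H v b y /\ e x y.

Definition induced_guidance W H :=
  forall u v l, u != v -> dist_is (induced W) u v l -> guided H u v l.

Lemma guided_sub H H' u v l : subrel H H' -> guided H u v l -> guided H' u v l.
Proof.
move=> HH' [a [b [ab [x [y [ux [vy exy]]]]]]].
by exists a, b; split=> //; exists x, y; split; [|split]; try apply: ball_sub HH' _.
Qed.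

Lemma guided_sym H u v l : guided H u v l -> guided H v u l.
Proof.
move=> [a [b [ab [x [y [ux [vy exy]]]]]]].
by exists b, a; rewrite addnC; split=> //; exists y, x; rewrite e_sym.
Qed.

Lemma induced_guidance_small W H : #|W| < 2 -> induced_guidance W H.
Proof.
move=> W_lt2 u v [|l] uv [uWv _].
  by move/walk0: uWv => /eqP; rewrite (negbTE uv).
have [uW vW] := walk_induced_mem uWv.
suff : 1 < #|W| by rewrite ltnNge -ltnS W_lt2.
by apply/card_gt1P; exists u, v.
Qed.

Definition twin_classes W A (cls : T -> nat) :=
  {in A &, forall x x', cls x = cls x' -> {in W :\: A, forall y, e x y = e x' y}}.

Definition bounded_guidance W (d : nat) H :=
  [/\ subrel H (induced W), forall u, outdeg H u <= d & induced_guidance W H].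

Lemma bounded_guidance_trivial W d : #|W| < 2 -> exists H, bounded_guidance W d H.
Proof.
move=> W_lt2; exists [rel _ _ | false]; split=> [x y // | u |].
  by rewrite outdeg_eq0.
exact: induced_guidance_small.
Qed.

Section Split.
Variables (k : nat) (W A : {set T}) (cls : T -> nat).
Hypotheses (sub_AW : A \subset W) (cls_lt : {in A, forall x, cls x < k}).
Hypothesis cls_twins : twin_classes W A cls.

Definition label_class (c : nat) : pred T := fun x => (x \in A) && (cls x == c).

Definition class_nbhd (c : nat) : pred T :=
  fun y => (y \in W :\: A) && [exists x, label_class c x && e x y].

Lemma guided_across H p q u v j m :
    (forall c : 'I_k, guides_to (induced W) H (label_class c)) ->
    (forall c : 'I_k, guides_to (induced W) H (class_nbhd c)) ->
    p \in A -> q \in W :\: A -> e p q ->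
    walk (induced W) u p j -> walk (induced W) q v m -> guided H u v (j + m.+1).
Proof.
move=> to_class to_nbhd pA qB epq up qv; pose c := Ordinal (cls_lt pA).
have pc : label_class c p by rewrite /label_class pA eqxx.
have [x /andP [xA /eqP xc] ux] := to_class c j u (reaches_walk pc up).
have qc : class_nbhd c q by rewrite /class_nbhd qB; apply/existsP; exists p; rewrite pc.
have [y /andP [yB /existsP [x' /andP [/andP [x'A /eqP x'c] ex'y]]] vy] :=
  to_nbhd c m v (reaches_walk qc (walk_rev (induced_sym W) qv)).
exists j, m; split; first by rewrite addnS.
by exists x, y; split; [|split]; rewrite // (cls_twins xA x'A) // xc x'c.
Qed.

Lemma induced_guidance_split HA HB H :
    induced_guidance A HA -> induced_guidance (W :\: A) HB ->
    subrel HA H -> subrel HB H ->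
    (forall c : 'I_k, guides_to (induced W) H (label_class c)) ->
    (forall c : 'I_k, guides_to (induced W) H (class_nbhd c)) ->
  induced_guidance W H.
Proof.
move=> gA gB AH BH to_class to_nbhd u v [|l] uv [uWv min_l].
  by move/walk0: uWv => /eqP; rewrite (negbTE uv).
have [uW _] := walk_induced_mem uWv.
case: (walk_induced_split A uW uWv) => [[_ uAv] | [_ uBv] | [j [m [p [q [<- up pq qv pAq]]]]]].
- apply: guided_sub AH _; apply: gA uv _.
  exact: dist_is_induced_sub sub_AW (conj uWv min_l) uAv.
- apply: guided_sub BH _; apply: gB uv _.
  exact: dist_is_induced_sub (subsetDl W A) (conj uWv min_l) uBv.
have /and3P [pW qW epq] := pq.
case pA: (p \in A) in pAq.
  have qB : q \in W :\: A by rewrite inE qW andbT; move: pAq; case: (q \in A).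
  exact: (guided_across to_class to_nbhd pA qB epq up qv).
have qA : q \in A by move: pAq; case: (q \in A).
have pB : p \in W :\: A by rewrite inE pA.
have [vq pu] := (walk_rev (induced_sym W) qv, walk_rev (induced_sym W) up).
rewrite -addSnnS addnC; apply: guided_sym.
by apply: (guided_across to_class to_nbhd qA pB _ vq pu); rewrite e_sym.
Qed.

Lemma bounded_guidance_split d HA HB :
    bounded_guidance A d HA -> bounded_guidance (W :\: A) d HB ->
  exists H, bounded_guidance W (d + 2 * k) H.
Proof.
move=> [subA degA gA] [subB degB gB].
have [g1 g1P] := choice _ (fun c : 'I_k =>
  exists_nearest_pointer (induced W) (label_class c)).
have [g2 g2P] := choice _ (fun c : 'I_k =>
  exists_nearest_pointer (induced W) (class_nbhd c)).
pose P := relU (pointers g1) (pointers g2).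
have subP : subrel P (induced W).
  by move=> x y /orP [] /existsP [c gxy]; [apply: (g1P c).1 gxy | apply: (g2P c).1 gxy].
exists (relU (relU HA HB) P); split.
- move=> x y /orP [/orP [/subA | /subB] |/subP //]; apply: induced_sub => //.
  exact: subsetDl.
- move=> u; apply: leq_trans (outdeg_relU _ _ _) _; apply: leq_add.
    apply: (outdeg_relU_disjoint (A := A)) => // [x y /subA /and3P [] //|].
    by move=> x y /subB /and3P []; rewrite inE => /andP [].
  apply: leq_trans (outdeg_relU _ _ _) _.
  by rewrite mul2n -addnn leq_add // -{2}(card_ord k) outdeg_pointers.
- apply: induced_guidance_split gA gB _ _ _ _.
  + by move=> x y /= ->.
  + by move=> x y /= ->; rewrite orbT.
  + move=> c; apply: guides_to_sub (g1P c).2 => x y /pointer_rel_sub /= ->.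
    by rewrite orbT.
  + move=> c; apply: guides_to_sub (g2P c).2 => x y /pointer_rel_sub /= ->.
    by rewrite !orbT.
Qed.

End Split.

Definition twin_separable (k : nat) : Prop :=
  forall W, 1 < #|W| -> exists A (cls : T -> nat),
    [/\ A \subset W, 3 * #|A| <= 2 * #|W|, 3 * #|W :\: A| <= 2 * #|W|,
        {in A, forall x, cls x < k} & twin_classes W A cls].

(* Balanced splits shrink |W| by a factor 3/2, so |W| < 2 (3/2)^L allows depth L. *)
Lemma exists_bounded_guidance k : twin_separable k ->
  forall L W, 2 ^ L * #|W| < 2 * 3 ^ L -> exists H, bounded_guidance W (2 * k * L) H.
Proof.
move=> sep; elim=> [|L IHL] W small.
  by apply: bounded_guidance_trivial; rewrite mul1n in small.
have [W_lt2 | W_ge2] := ltnP #|W| 2; first exact: bounded_guidance_trivial.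
have [A [cls [AW A_small B_small cls_lt cls_twins]]] := sep W W_ge2.
have [|HA gA] := IHL A; first by move: small; rewrite !expnS; nia.
have [|HB gB] := IHL (W :\: A); first by move: small; rewrite !expnS; nia.
rewrite mulnS addnC; exact: (bounded_guidance_split AW cls_lt cls_twins gA gB).
Qed.

End InducedGuidance.

Section CliqueWidth.
Variables (T : finType) (k : nat).
Implicit Types (s t : cwexp T) (x y : T).

Fixpoint subterm s t : Prop := s = t \/
  match t with
  | CVtx _ _ => False
  | CUnion a b => subterm s a \/ subterm s b
  | CRelab _ _ a | CJoin _ _ a => subterm s a
  end.

Lemma subterm_refl t : subterm t t.
Proof. by case: t => *; left. Qed.

Lemma subterm_verts s t : subterm s t -> cw_verts s \subset cw_verts t.
Proof.
elim: t => [z i | a IHa b IHb | i j a IHa | i j a IHa] /= [-> // | sub] //.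
by case: sub => [/IHa | /IHb] /subset_trans; apply; [apply: subsetUl | apply: subsetUr].
all: exact: IHa.
Qed.

Lemma subterm_wf s t : subterm s t -> cw_wf k t -> cw_wf k s.
Proof.
elim: t => [z i | a IHa b IHb | i j a IHa | i j a IHa] /= [-> // | sub] //.
- by case/and3P => wfa wfb _; case: sub => [/IHa | /IHb]; apply.
- by case/and3P => _ _ /(IHa sub).
- by case/and4P => _ _ _ /(IHa sub).
Qed.

Lemma cw_edges_verts t x y : cw_edges t x y -> x \in cw_verts t /\ y \in cw_verts t.
Proof.
elim: t => [z i | a IHa b IHb | i j a IHa | i j a IHa] //=.
- by case/orP => [/IHa | /IHb] [xt yt]; rewrite !inE xt yt ?orbT.
- by case/orP => [/IHa // | /and3P []].
Qed.

Lemma cw_lab_lt t x : cw_wf k t -> x \in cw_verts t -> cw_lab t x < k.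
Proof.
elim: t => [z i | a IHa b IHb | i j a IHa | i j a IHa] //=.
- case/and3P => wfa wfb _; rewrite inE.
  by case: ifP => [xa _ | _ /= xb]; [apply: IHa | apply: IHb].
- by case/and3P => _ jk wfa xa; case: ifP => // _; apply: IHa.
- by case/and4P => _ _ _ wfa; apply: IHa.
Qed.

Lemma cw_lab_subterm t s : cw_wf k t -> subterm s t ->
  exists f : nat -> nat, {in cw_verts s, forall x, cw_lab t x = f (cw_lab s x)}.
Proof.
elim: t => [z i | a IHa b IHb | i j a IHa | i j a IHa] wf [<- | sub];
  try by exists id.
- have /and3P [wfa wfb dis] := wf; case: sub => [sub | sub].
    have [f fP] := IHa wfa sub; exists f => x xs.
    by rewrite /= (subsetP (subterm_verts sub) x xs) fP.
  have [f fP] := IHb wfb sub; exists f => x xs.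
  by rewrite /= (disjointFl dis (subsetP (subterm_verts sub) x xs)) fP.
- have /and3P [_ _ /IHa /(_ sub) [f fP]] := wf.
  by exists (fun c => if f c == i then j else f c) => x xs /=; rewrite fP.
- by have /and4P [_ _ _ /IHa /(_ sub) [f fP]] := wf; exists f.
Qed.

Lemma cw_edges_subterm t s : cw_wf k t -> subterm s t ->
  exists F : nat -> T -> bool, forall x y,
    x \in cw_verts s -> y \notin cw_verts s -> cw_edges t x y = F (cw_lab s x) y.
Proof.
elim: t => [z i | a IHa b IHb | i j a IHa | i j a IHa] wf [<- | sub].
all: try by exists (fun _ _ => false) => x y _ ys; apply: contraNF ys => /cw_edges_verts [].
- have /and3P [wfa wfb dis] := wf.
  have no_edge c x y : x \notin cw_verts c -> cw_edges c x y = false.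
    by move=> xc; apply: contraNF xc => /cw_edges_verts [].
  case: sub => [sub | sub].
    have [F FP] := IHa wfa sub; exists F => x y xs ys.
    have xa := subsetP (subterm_verts sub) x xs.
    by rewrite /= FP // no_edge ?orbF // (disjointFr dis xa).
  have [F FP] := IHb wfb sub; exists F => x y xs ys.
  have xb := subsetP (subterm_verts sub) x xs.
  by rewrite /= FP // no_edge // (disjointFl dis xb).
- by have /and3P [_ _ /IHa /(_ sub) [F FP]] := wf; exists F.
- have /and4P [_ _ _ wfa] := wf.
  have [f fP] := cw_lab_subterm wfa sub; have [F FP] := IHa wfa sub.
  exists (fun c y => F c y || (y \in cw_verts a) &&
    ((f c == i) && (cw_lab a y == j) || (f c == j) && (cw_lab a y == i))) => x y xs ys.
  by rewrite /= FP // fP // (subsetP (subterm_verts sub) x xs).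
Qed.

Lemma cw_balanced_subterm t (W : {set T}) : 1 < #|W| ->
    2 * #|W| < 3 * #|cw_verts t :&: W| ->
  exists2 s, subterm s t & #|W| <= 3 * #|cw_verts s :&: W| <= 2 * #|W|.
Proof.
move=> W_gt1; elim: t => [z i | a IHa b IHb | i j a IHa | i j a IHa] /= big.
- have : #|[set z] :&: W| <= 1 by rewrite -(cards1 z) subset_leq_card ?subsetIl.
  lia.
- have [/IHa [s sa bal] | small_a] := ltnP (2 * #|W|) (3 * #|cw_verts a :&: W|).
    by exists s => //; right; left.
  have [/IHb [s sb bal] | small_b] := ltnP (2 * #|W|) (3 * #|cw_verts b :&: W|).
    by exists s => //; right; right.
  have := (leq_card_setU (cw_verts a :&: W) (cw_verts b :&: W)).1; rewrite -setIUl.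
  have [ba | ab] := leqP #|cw_verts b :&: W| #|cw_verts a :&: W| => AB.
    by exists a; [right; left; apply: subterm_refl | apply/andP; split => //; lia].
  by exists b; [right; right; apply: subterm_refl | apply/andP; split => //; lia].
- by have [s sa bal] := IHa big; exists s => //; right.
- by have [s sa bal] := IHa big; exists s => //; right.
Qed.

Lemma cw_twin_separable t (e : rel T) : cw_wf k t -> cw_verts t = [set: T] ->
  e =2 cw_edges t -> twin_separable e k.
Proof.
move=> wf t_all e_t W W_gt1.
have [|s st /andP [lb ub]] := @cw_balanced_subterm t W W_gt1.
  by rewrite t_all setTI; lia.
have [F FP] := cw_edges_subterm wf st.
exists (cw_verts s :&: W), (cw_lab s); split; first exact: subsetIr.
- lia.
- by rewrite cardsDS ?subsetIr //; lia.
- by move=> x /setIP [xs _]; apply: cw_lab_lt (subterm_wf st wf) xs.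
move=> x x' /setIP [xs _] /setIP [x's _] same y /setDP [yW].
rewrite inE yW andbT => ys.
by rewrite !e_t !FP ?same.
Qed.

End CliqueWidth.

Lemma trunc_log_depth n : 2 ^ (2 * trunc_log 2 n) * n < 2 * 3 ^ (2 * trunc_log 2 n).
Proof.
set t := trunc_log 2 n.
have n_lt : n < 2 * 2 ^ t by rewrite -expnS trunc_log_ltn.
have [-> ->] : 2 ^ (2 * t) = 4 ^ t /\ 3 ^ (2 * t) = 9 ^ t by rewrite !expnM.
have e8 : 8 ^ t = 4 ^ t * 2 ^ t by rewrite -expnMn.
have le89 : 8 ^ t <= 9 ^ t by case: t {n_lt e8} => [|t] //; rewrite leq_exp2r.
have pos4 : 0 < 4 ^ t by rewrite expn_gt0.
nia.
Qed.

Theorem corollary35 :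
  exists C : nat, forall (k : nat) (T : finType) (e : rel T),
    simple_graph e -> cw_le k e ->
    exists H : rel T, partial_orientation e H /\
      (forall u, outdeg H u <= C * k * trunc_log 2 #|T|) /\
      weak_inf_guidance e H.
Proof.
exists 4 => k T e [e_sym _] [t [wf [t_all e_t]]].
have sep := cw_twin_separable wf t_all e_t.
have := trunc_log_depth #|T|; rewrite -cardsT.
move=> /(exists_bounded_guidance e_sym sep) [H [subH degH gH]].
exists H; split; first by move=> x y /subH; rewrite induced_setT.
split; first by move=> u; apply: leq_trans (degH u) _; lia.
move=> r _ u v l uv _ dist_uv; apply: gH uv _.
by apply: (eq_dist_is _ dist_uv) => x y; rewrite induced_setT.
Qed.
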